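(* Let $k$ be an algebraically closed field of characteristic zero, let $\mathbb{T}^2=\operatorname{Spec}k[x^{\pm1},y^{\pm1}]$ and $\omega=\frac{dx}{x}\wedge\frac{dy}{y}$. Then: (1) the Lie subalgebra of $\mathrm{Vec}(\mathbb{T}^2)$ generated by all locally nilpotent vector fields is zero, and so is the one generated by the Hamiltonian locally nilpotent vector fields; (2) $\mathcal{H}_\omega(\mathbb{T}^2)$ is a proper Lie ideal of codimension $2$ of $\mathrm{VP}_\omega(\mathbb{T}^2)$; (3) $\mathcal{E}_\omega(\mathbb{T}^2)=[\mathcal{H}_\omega(\mathbb{T}^2),\mathcal{H}_\omega(\mathbb{T}^2)]=\mathcal{H}_\omega(\mathbb{T}^2)$, and this is a simple Lie algebra of bracket width one.
   Context: For a smooth affine surface $S$ with nowhere vanishing $2$-form $\omega$: $\mathrm{Div}_\omega\xi\in\mathcal{O}(S)$ is defined by $d(i_\xi\omega)=(\mathrm{Div}_\omega\xi)\omega$; $\mathrm{VP}_\omega(S)=\{\xi\in\mathrm{Vec}(S):\mathrm{Div}_\omega\xi=0\}$ (symplectic vector fields, i.e. $i_\xi\omega$ closed). For $f\in\mathcal{O}(S)$, $\theta_f$ is the unique vector field with $i_{\theta_f}\omega=df$; $\mathcal{H}_\omega(S)=\{\theta_f: f\in\mathcal{O}(S)\}$ (Hamiltonian vector fields, i.e. those $\xi$ with $i_\xi\omega$ exact). $E_\omega(S)=\mathrm{Div}_\omega(\mathrm{Vec}(S))\subseteq\mathcal{O}(S)$ and $\mathcal{E}_\omega(S)=\{\theta_f: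 f\in E_\omega(S)\}$. A vector field is locally nilpotent if the corresponding derivation $\partial$ of $\mathcal{O}(S)$ satisfies: for every $f$ some power $\partial^s f=0$. The bracket width of a Lie algebra $L$ is the supremum over $a\in[L,L]$ of the smallest number of brackets of elements of $L$ summing to $a$. *)

From HB Require Import structures.
From mathcomp Require Import all_boot all_order all_algebra.
From mathcomp Require Import finmap.
From mathcomp.multinomials Require Import xfinmap monalg.

Set Implicit Arguments.
Unset Strict Implicit.
Unset Printing Implicit Defensive.

Import Order.TTheory GRing.Theory Num.Theory.
Local Open Scope fset.
Local Open Scope ring_scope.

(* The coordinate ring O(T^2) = k[x^{+-1}, y^{+-1}]: the group algebra *)
(* of Z^2, i.e. finitely supported functions Z^2 -> k with convolution. *)
(* Monomial x^i y^j is << (i, j) >>.                                   *)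
Definition Z2 := (int * int)%type.

Definition LP (R : nzRingType) := malg Z2 R.

Section LPRing.
Context (R : nzRingType).
Implicit Types (g : LP R) (k : Z2).

Local Notation "g1 *M_[ k1 , k2 ] g2" :=
  << g1@_k1 * g2@_k2 *g (k1 + k2)%R >>
  (at level 40, no associativity).

Definition lpone : LP R := << (0 : Z2) >>.

Definition lpmul g1 g2 : LP R :=
  \sum_(k1 <- msupp g1) \sum_(k2 <- msupp g2) g1 *M_[k1, k2] g2.

Lemma lpmulw (d1 d2 : {fset Z2}) g1 g2 :
  msupp g1 `<=` d1 -> msupp g2 `<=` d2 ->
  lpmul g1 g2 = \sum_(k1 <- d1) \sum_(k2 <- d2) g1 *M_[k1, k2] g2.
Proof.
move=> le_d1 le_d2; rewrite /lpmul (big_fset_incl _ le_d1) /=.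
  apply/eq_bigr=> k1 _; apply/big_fset_incl => // k _ /mcoeff_outdom ->.
  by rewrite mulr0 monalgU0.
move=> k _ /mcoeff_outdom g1k.
by rewrite big1 => // k' _; rewrite g1k mul0r monalgU0.
Qed.

Lemma lpmul0g : left_zero 0 lpmul.
Proof. by move=> g; rewrite /lpmul msupp0 big_seq_fset0. Qed.

Lemma lpmulg0 : right_zero 0 lpmul.
Proof.
by move=> g; rewrite /lpmul exchange_big msupp0 big_seq_fset0.
Qed.

Lemma lpmulUg c k g :
  lpmul << c *g k >> g = \sum_(k' <- msupp g) << c * g@_k' *g (k + k')%R >>.
Proof.
rewrite (lpmulw msuppU_le (fsubset_refl _)) big_seq_fset1.
by apply/eq_bigr => k' _; rewrite mcoeffUU.
Qed.

Lemma lpmulgU c k g :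
  lpmul g << c *g k >> = \sum_(k' <- msupp g) << g@_k' * c *g (k' + k)%R >>.
Proof.
rewrite (lpmulw (fsubset_refl _) msuppU_le).
by apply/eq_bigr=> k' _; rewrite big_seq_fset1 mcoeffUU.
Qed.

Lemma lpmulUU c1 c2 k1 k2 :
  lpmul << c1 *g k1 >> << c2 *g k2 >> = << c1 * c2 *g (k1 + k2)%R >>.
Proof. by rewrite (lpmulw msuppU_le msuppU_le) !big_seq_fset1 !mcoeffUU. Qed.

Lemma lpmulEl1 g1 g2 :
  lpmul g1 g2 = \sum_(k1 <- msupp g1) lpmul << g1@_k1 *g k1 >> g2.
Proof. by apply/eq_bigr=> k _; rewrite lpmulUg. Qed.

Lemma lpmulEr1 g1 g2 :
  lpmul g1 g2 = \sum_(k2 <- msupp g2) lpmul g1 << g2@_k2 *g k2 >>.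
Proof.
rewrite {1}/lpmul exchange_big /=; apply/eq_bigr=> k _; rewrite lpmulgU.
by apply/eq_bigr=> k' _.
Qed.

Lemma lpmul1g : left_id lpone lpmul.
Proof.
move=> g; rewrite lpmulUg [RHS]monalgE.
by apply/eq_bigr=> kg _; rewrite mul1r add0r.
Qed.

Lemma lpmulg1 : right_id lpone lpmul.
Proof.
move=> g; rewrite lpmulgU [RHS]monalgE.
by apply/eq_bigr=> k _; rewrite mulr1 addr0.
Qed.

Lemma lpmulgDl : left_distributive lpmul +%R.
Proof.
move=> g1 g2 g.
rewrite [in RHS](lpmulw (fsubsetUl _ (msupp g2)) (fsubset_refl _)).
rewrite [in RHS](lpmulw (fsubsetUr (msupp g1) _) (fsubset_refl _)).
rewrite (lpmulw (msuppD_le _ _) (fsubset_refl _)).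
rewrite -big_split /=; apply/eq_bigr=> k1 _.
rewrite -big_split /=; apply/eq_bigr=> k2 _.
by rewrite mcoeffD mulrDl monalgUD.
Qed.

Lemma lpmulgDr : right_distributive lpmul +%R.
Proof.
move=> g g1 g2.
rewrite [in RHS](lpmulw (fsubset_refl _) (fsubsetUl _ (msupp g2))).
rewrite [in RHS](lpmulw (fsubset_refl _) (fsubsetUr (msupp g1) _)).
rewrite (lpmulw (fsubset_refl _) (msuppD_le _ _)).
rewrite -big_split /=; apply/eq_bigr=> k1 _.
rewrite -big_split /=; apply/eq_bigr=> k2 _.
by rewrite mcoeffD mulrDr monalgUD.
Qed.

Lemma lpmulA : associative lpmul.
Proof.
move=> g1 g2 g3.
rewrite [RHS](big_morph (lpmul^~ _) (fun _ _ => lpmulgDl _ _ _) (lpmul0g _)).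
rewrite lpmulEl1; apply/eq_bigr=> k1 _.
rewrite [LHS](big_morph (lpmul _) (fun _ _ => lpmulgDr _ _ _) (lpmulg0 _)).
rewrite [RHS](big_morph (lpmul^~ _) (fun _ _ => lpmulgDl _ _ _) (lpmul0g _)).
apply/eq_bigr=> k2 _.
rewrite [LHS](big_morph (lpmul _) (fun _ _ => lpmulgDr _ _ _) (lpmulg0 _)).
by rewrite lpmulEr1; apply/eq_bigr=> k3 _; rewrite !lpmulUU mulrA addrA.
Qed.

Lemma lpone_neq0 : lpone != 0.
Proof. by apply/eqP/malgP=> /(_ 0) /eqP; rewrite !mcoeffsE oner_eq0. Qed.

HB.instance Definition _ := GRing.Lmodule.on (LP R).
HB.instance Definition _ := GRing.Zmodule_isRing.Build (LP R)
  lpmulA lpmul1g lpmulg1 lpmulgDl lpmulgDr lpone_neq0.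

Lemma lpscaleE c g : c *: g = lpmul << c *g 0 >> g.
Proof.
rewrite lpmulUg malgZ_def; apply/eq_bigr=> k _.
by rewrite add0r.
Qed.

Lemma lpscaleAl c (g1 g2 : LP R) : c *: (g1 * g2) = (c *: g1) * g2.
Proof. by rewrite !lpscaleE; apply: lpmulA. Qed.

HB.instance Definition _ := GRing.Lmodule_isLalgebra.Build R (LP R)
  lpscaleAl.

End LPRing.

Section LPComRing.
Context (R : comNzRingType).

Lemma lpmulC : @commutative (LP R) _ *%R.
Proof.
move=> g1 g2; rewrite /GRing.mul /= /lpmul exchange_big /=.
apply/eq_bigr=> k1 _; apply/eq_bigr=> k2 _.
by rewrite mulrC addrC.
Qed.

HB.instance Definition _ := GRing.Ring_hasCommutativeMul.Build (LP R) lpmulC.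
HB.instance Definition _ := GRing.Lalgebra_isComAlgebra.Build R (LP R).

End LPComRing.

Section LieVocabulary.
Context (K : nzRingType) (V : lmodType K) (brk : V -> V -> V).

Definition subspace (P : V -> Prop) : Prop :=
  P 0 /\ (forall (a : K) x y, P x -> P y -> P (a *: x + y)).

Definition lie_subalgebra (P : V -> Prop) : Prop :=
  subspace P /\ (forall x y, P x -> P y -> P (brk x y)).

Definition lie_generated (S : V -> Prop) (v : V) : Prop :=
  forall P, lie_subalgebra P -> (forall s, S s -> P s) -> P v.

Definition lin_span (S : V -> Prop) (v : V) : Prop :=
  exists n (c : 'I_n -> K) (w : 'I_n -> V),
    (forall i, S (w i)) /\ v = \sum_(i < n) c i *: w i.

Definition lie_commutator (A B : V -> Prop) : V -> Prop :=
  lin_span (fun w => exists a b, A a /\ B b /\ w = brk a b).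

Definition lie_ideal (I A : V -> Prop) : Prop :=
  subspace I /\ (forall x, I x -> A x) /\
  (forall a x, A a -> I x -> I (brk a x)).

Definition proper_in (I A : V -> Prop) : Prop :=
  (forall x, I x -> A x) /\ exists x, A x /\ ~ I x.

(* codimension of the subspace I in the subspace A is n, i.e.
   dim (A / I) = n: the classes of some w_0,..,w_{n-1} in A form a
   basis of A / I *)
Definition codim_in (n : nat) (I A : V -> Prop) : Prop :=
  exists w : 'I_n -> V,
    (forall i, A (w i)) /\
    (forall x, A x -> exists c : 'I_n -> K, I (x - \sum_(i < n) c i *: w i)) /\
    (forall c : 'I_n -> K, I (\sum_(i < n) c i *: w i) -> forall i, c i = 0).

Definition simple_lie (A : V -> Prop) : Prop :=
  lie_subalgebra A /\
  (exists a b, A a /\ A b /\ brk a b <> 0) /\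
  (forall I, lie_ideal I A -> (forall x, I x -> x = 0) \/ (forall x, A x -> I x)).

Definition bracket_width_le (A : V -> Prop) (n : nat) : Prop :=
  forall a, lie_commutator A A a ->
    exists m, (m <= n)%N /\ exists b c : 'I_m -> V,
      (forall i, A (b i) /\ A (c i)) /\ a = \sum_(i < m) brk (b i) (c i).

Definition bracket_width_eq (A : V -> Prop) (n : nat) : Prop :=
  bracket_width_le A n /\ forall m, (m < n)%N -> ~ bracket_width_le A m.

End LieVocabulary.

Section Torus.
Context (k : fieldType).

Definition Ot := LP k.

Definition mono (i j : int) : Ot := << ((i, j) : Z2) >>.
Definition xx : Ot := mono 1 0.
Definition yy : Ot := mono 0 1.
Definition xinv : Ot := mono (-1) 0.
Definition yinv : Ot := mono 0 (-1).

(* Euler derivations x d/dx and y d/dy: x^i y^j |-> i x^i y^j, j x^i y^j *)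
Definition dX (f : Ot) : Ot :=
  \sum_(m <- msupp f) << (m.1)%:~R * f@_m *g m >>.
Definition dY (f : Ot) : Ot :=
  \sum_(m <- msupp f) << (m.2)%:~R * f@_m *g m >>.

(* Vec(T^2) = Der_k(O(T^2)) is the free O-module with basis x d/dx,
   y d/dy; xi = (a, b) stands for a x d/dx + b y d/dy *)
Definition Vect := (Ot * Ot)%type.

Definition vact (xi : Vect) (f : Ot) : Ot := xi.1 * dX f + xi.2 * dY f.

Definition vf_of_der (D : Ot -> Ot) : Vect := (xinv * D xx, yinv * D yy).

Definition vbracket (xi eta : Vect) : Vect :=
  vf_of_der (fun f => vact xi (vact eta f) - vact eta (vact xi f)).

Definition locally_nilpotent (xi : Vect) : Prop :=
  forall f : Ot, exists s : nat, iter s (vact xi) f = 0.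

(* differential forms: a 1-form (a, b) is a dx/x + b dy/y; a 2-form c is
   c (dx/x /\ dy/y) *)
Definition Form1 := (Ot * Ot)%type.
Definition Form2 := Ot.
Definition dx_x : Form1 := (1, 0).
Definition dy_y : Form1 := (0, 1).
Definition wedge (al be : Form1) : Form2 := al.1 * be.2 - al.2 * be.1.
Definition omega : Form2 := wedge dx_x dy_y.

Definition d0 (f : Ot) : Form1 := (dX f, dY f).
Definition d1 (al : Form1) : Form2 := dX al.2 - dY al.1.

(* evaluation of a 1-form on a vector field: (dx/x)(xi) = xi(x)/x *)
Definition eval1 (al : Form1) (xi : Vect) : Ot :=
  al.1 * (xinv * vact xi xx) + al.2 * (yinv * vact xi yy).

(* interior product of a 2-form c omega:
   i_xi (al /\ be) = al(xi) be - be(xi) al *)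
Definition contr (xi : Vect) (c : Form2) : Form1 :=
  (c * (- eval1 dy_y xi), c * eval1 dx_x xi).

(* Div_omega xi = f  iff  d (i_xi omega) = f omega *)
Definition is_div (xi : Vect) (f : Ot) : Prop := d1 (contr xi omega) = f * omega.

Definition VP (xi : Vect) : Prop := d1 (contr xi omega) = 0.

Definition Ham (xi : Vect) : Prop := exists f : Ot, contr xi omega = d0 f.

Definition Eom (f : Ot) : Prop := exists xi : Vect, is_div xi f.

Definition calE (xi : Vect) : Prop :=
  exists f : Ot, Eom f /\ contr xi omega = d0 f.

End Torus.

From HB Require Import structures.
From mathcomp Require Import all_boot all_order all_algebra.
From mathcomp Require Import finmap.
From mathcomp.multinomials Require Import monalg.
From mathcomp Require Import zify ring.
From Stdlib Require Import Classical.

Set Implicit Arguments.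
Unset Strict Implicit.
Unset Printing Implicit Defensive.

Import Order.TTheory GRing.Theory Num.Theory.
Local Open Scope fset.
Local Open Scope ring_scope.

(* Write vector fields as a x d/dx + b y d/dy.  Then omega is the constant 1,
   Div (a, b) = x a_x + y b_y and the Hamiltonian fields are
   theta_f = (y f_y, - x f_x).  The Euler derivations x d/dx and y d/dy act on
   the monomial x^m by the weights m.1 and m.2, and
   [theta_f, theta_g] = theta_{f, g} with {x^p, x^m} = cross p m * x^(m + p),
   where cross p m = p.2 m.1 - p.1 m.2.
   - A divergence-free field minus its constant part is Hamiltonian, and
     [xi, theta_f] = theta_(xi f) when Div xi = 0.
   - For p = (1, N) with N large, cross p m <> 0 on every nonconstant exponent
     m of f, so f minus its constant term is {x^p, g} for some g: every
     theta_f is a single bracket, and every f without constant term is a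
     divergence, as Poisson brackets are.
   - {x^q, {x^-q, _}} multiplies x^m by -(cross q m)^2.  A suitable q separates
     two exponents that are neither equal nor opposite, so a nonzero ideal can
     be stripped down to a single theta_(x^m), and brackets with monomials
     then produce every theta_(x^n).
   - If xi <> 0, let t be its lexicographically largest exponent: xi^s x^n has
     leading exponent n + s t with coefficient prod_(i < s) phi (n + i t) for
     a nonzero linear form phi, and in characteristic 0 some n makes all these
     factors nonzero. *)

Section LieVocabularyTheory.
Variables (K : nzRingType) (V : lmodType K) (brk : V -> V -> V).
Implicit Types (P S : V -> Prop).

Lemma subspace_sum P (I : Type) (r : seq I) (F : I -> V) :
  subspace P -> (forall i, P (F i)) -> P (\sum_(i <- r) F i).
Proof.
move=> [P0 PZD] PF; apply: (big_ind P) => // x y Px Py.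
by rewrite -[x]scale1r; apply: PZD.
Qed.

Lemma lin_span_sub P S v : subspace P -> (forall s, S s -> P s) -> lin_span S v -> P v.
Proof.
move=> subP SP [n [c [w [Sw ->]]]]; apply: subspace_sum => // i.
by case: subP => P0 PZD; rewrite -[_ *: _]addr0; apply: PZD => //; apply: SP.
Qed.

Lemma lin_span1 S s : S s -> lin_span S s.
Proof.
by move=> Ss; exists 1%N, (fun=> 1), (fun=> s); split=> //; rewrite big_ord1 scale1r.
Qed.

Lemma lie_commutator_sub P v :
  lie_subalgebra brk P -> lie_commutator brk P P v -> P v.
Proof.
move=> [subP brkP]; apply: lin_span_sub => // _ [a [b [Pa [Pb ->]]]].
exact: brkP.
Qed.

Lemma lie_subalgebra0 : brk 0 0 = 0 -> lie_subalgebra brk (eq^~ 0).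
Proof.
move=> brk00; split=> [|_ _ -> ->] //; split=> // a _ _ -> ->.
by rewrite scaler0 addr0.
Qed.

End LieVocabularyTheory.

(** * Two commuting derivations *)

Lemma additive_opp (U V : zmodType) (D : U -> V) :
  {morph D : a b / a - b} -> {morph D : a / - a}.
Proof.
move=> DB a; have D0 : D 0 = 0 by rewrite -[X in D X](subrr 0) DB subrr.
by rewrite -sub0r DB D0 sub0r.
Qed.

Lemma additive_add (U V : zmodType) (D : U -> V) :
  {morph D : a b / a - b} -> {morph D : a b / a + b}.
Proof. by move=> DB a b; rewrite -{1}[b]opprK DB (additive_opp DB) opprK. Qed.

Section CommutingDerivations.
Variables (R : comNzRingType) (D1 D2 : R -> R).
Hypotheses (D1B : {morph D1 : a b / a - b}) (D2B : {morph D2 : a b / a - b})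
           (D1M : forall a b, D1 (a * b) = D1 a * b + a * D1 b)
           (D2M : forall a b, D2 (a * b) = D2 a * b + a * D2 b)
           (D12 : forall a, D1 (D2 a) = D2 (D1 a)).
Implicit Types (f g : R) (xi eta : R * R).

Let D1N := additive_opp D1B.
Let D2N := additive_opp D2B.
Let D1D := additive_add D1B.
Let D2D := additive_add D2B.

Definition der_act xi f := xi.1 * D1 f + xi.2 * D2 f.

Definition der_bracket xi eta : R * R :=
  (der_act xi eta.1 - der_act eta xi.1, der_act xi eta.2 - der_act eta xi.2).

Definition ham_field f : R * R := (D2 f, - D1 f).

Definition poisson f g := D2 f * D1 g - D1 f * D2 g.

Lemma der_act_mul xi f g : der_act xi (f * g) = der_act xi f * g + f * der_act xi g.
Proof. by rewrite /der_act D1M D2M; ring. Qed.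

(* The commutator of two fields evaluated on a common eigenvector [X] (on the
   torus: x and y, from which [vf_of_der] reads off a derivation). *)
Lemma der_commutator_eigen xi eta (X Xinv : R) (c : R * R -> R) :
  (forall z, der_act z X = c z * X) -> Xinv * X = 1 ->
  Xinv * (der_act xi (der_act eta X) - der_act eta (der_act xi X)) =
  der_act xi (c eta) - der_act eta (c xi).
Proof.
move=> eigX XinvK; rewrite !eigX !der_act_mul !eigX.
transitivity (Xinv * X * (der_act xi (c eta) - der_act eta (c xi))); first by ring.
by rewrite XinvK mul1r.
Qed.

Lemma der_bracket_ham f g :
  der_bracket (ham_field f) (ham_field g) = ham_field (poisson f g).
Proof.
rewrite /der_bracket /der_act /=; congr pair.
  by rewrite D2B !D2M !D12; ring.
by rewrite !D1N !D2N D1B !D1M !D12; ring.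
Qed.

Lemma der_bracket_ham_r xi f : D1 xi.1 + D2 xi.2 = 0 ->
  der_bracket xi (ham_field f) = ham_field (der_act xi f).
Proof.
case: xi => a b /= /eqP; rewrite addr_eq0 => /eqP D1a.
rewrite /der_bracket /der_act /=; congr pair.
  by rewrite D2D !D2M D12 D1a; ring.
by rewrite !D1N ?D2N D1D !D1M ?D12 D1a; ring.
Qed.

Lemma der_bracket0 : der_bracket 0 0 = 0.
Proof. by rewrite /der_bracket /der_act /= !mul0r !addr0 subrr. Qed.

Lemma poisson_div f g : poisson f g = D1 (D2 f * g) + D2 (- (D1 f * g)).
Proof. by rewrite /poisson D2N D1M D2M D12; ring. Qed.

End CommutingDerivations.

Lemma der_bracket_ext (R : comNzRingType) (D1 D2 E1 E2 : R -> R) :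
  D1 =1 E1 -> D2 =1 E2 -> der_bracket D1 D2 =2 der_bracket E1 E2.
Proof. by move=> eqD1 eqD2 xi eta; rewrite /der_bracket /der_act !eqD1 !eqD2. Qed.

(** * Laurent polynomials and weight derivations *)

Section LaurentCoefficients.
Variable R : comNzRingType.
Implicit Types (f g : LP R) (m n p : Z2).

Lemma mcoeff_sum_shift (s : seq Z2) (F : Z2 -> R) p n : uniq s ->
  (\sum_(m <- s) << F m *g p + m >> : LP R)@_n =
  if n - p \in s then F (n - p) else 0.
Proof.
move=> us; rewrite raddf_sum /=.
have shiftE m : (p + m == n) = (m == n - p).
  by rewrite [RHS]eq_sym subr_eq [RHS]eq_sym addrC.
under eq_bigr do rewrite mcoeffU shiftE.
have [nps|nps] := boolP (n - p \in s).
  by rewrite (bigD1_seq (n - p)) //= eqxx big1 ?addr0 // => m /negPf ->.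
by rewrite big1_seq // => m /andP [_ ms]; case: eqP ms nps => // -> ->.
Qed.

Lemma mcoeff_one n : (1 : LP R)@_n = (n == 0)%:R.
Proof. by rewrite -[1]/(<< (0 : Z2) >> : LP R) mcoeffU eq_sym. Qed.

Lemma mcoeff_malg_fun (s : {fset Z2}) (F : Z2 -> R) n :
  (forall m, m \notin s -> F m = 0) -> ([malg m in s => F m] : LP R)@_n = F n.
Proof. by move=> Fs; rewrite mcoeffE; case: ifPn => // /Fs ->. Qed.

Lemma msupp_neq0 f : f != 0 -> exists m, m \in msupp f.
Proof.
move=> f0; apply/fset0Pn; apply: contra f0 => /eqP f_supp.
by apply/eqP/malgP => n; rewrite mcoeff0 mcoeff_outdom // f_supp.
Qed.

Lemma mcoeffUM (c : R) p g n : ((<< c *g p >> : LP R) * g)@_n = c * g@_(n - p).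
Proof.
rewrite [_ * _]lpmulUg mcoeff_sum_shift ?fset_uniq //.
by case: msuppP; rewrite ?mulr0.
Qed.

Lemma monalgUZ (c : R) p : << c *g p >> = c *: (<< p >> : LP R).
Proof.
apply/malgP => n; rewrite [RHS]mcoeffZ [LHS]mcoeffU [in RHS]mcoeffU.
by case: eqP; rewrite ?mulr1 ?mulr0.
Qed.

Lemma mcoeffMw (s : {fset Z2}) f g n : msupp f `<=` s ->
  (f * g)@_n = \sum_(m <- s) f@_m * g@_(n - m).
Proof.
move=> fs; rewrite {1}(monalgEw fs) mulr_suml raddf_sum /=.
by apply: eq_bigr => m _; rewrite mcoeffUM.
Qed.

Lemma mcoeffM f g n : (f * g)@_n = \sum_(m <- msupp f) f@_m * g@_(n - m).
Proof. exact: mcoeffMw. Qed.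

End LaurentCoefficients.

Definition wder_def (R : comNzRingType) (w : Z2 -> int) (f : LP R) : LP R :=
  \sum_(m <- msupp f) << (w m)%:~R * f@_m *g m >>.
Fact wder_key : unit. Proof. by []. Qed.
Definition wder := locked_with wder_key wder_def.

Section WeightDerivations.
Variables (R : comNzRingType) (w : Z2 -> int).
Implicit Types (f g : LP R) (m n p : Z2).
Local Notation wder := (@wder R w).

Lemma mcoeff_wder f n : (wder f)@_n = (w n)%:~R * f@_n.
Proof.
rewrite /wder unlock /wder_def; under eq_bigr do rewrite -[m in << _ *g m >>]add0r.
rewrite mcoeff_sum_shift ?fset_uniq // subr0.
by case: msuppP; rewrite ?mulr0.
Qed.

Fact wder_is_linear : linear wder.
Proof.
move=> c f g; apply/malgP => n.
by rewrite !(mcoeffD, mcoeffZ, mcoeff_wder) mulrDr mulrCA.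
Qed.

HB.instance Definition _ :=
  GRing.isLinear.Build R (LP R) (LP R) _ wder wder_is_linear.

Lemma wderB : {morph wder : f g / f - g}. Proof. exact: raddfB. Qed.
Lemma wderZ (c : R) f : wder (c *: f) = c *: wder f. Proof. exact: linearZ. Qed.

Lemma wderU (c : R) p : wder << c *g p >> = << (w p)%:~R * c *g p >>.
Proof.
apply/malgP => n; rewrite [LHS]mcoeff_wder [in LHS]mcoeffU [RHS]mcoeffU.
by case: eqP => [->|_]; rewrite ?mulr0.
Qed.

Lemma msupp_wder f : msupp (wder f) `<=` msupp f.
Proof.
apply/fsubsetP => m; rewrite -!mcoeff_neq0 mcoeff_wder.
by apply: contraNN => /eqP ->; rewrite mulr0.
Qed.

Hypothesis wB : {morph w : a b / a - b}.

Lemma wderM f g : wder (f * g) = wder f * g + f * wder g.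
Proof.
apply/malgP => n; rewrite [LHS]mcoeff_wder [RHS]mcoeffD.
rewrite [in RHS](mcoeffMw _ _ (msupp_wder f)) [in LHS]mcoeffM [X in _ + X]mcoeffM.
rewrite mulr_sumr -big_split /=; apply: eq_bigr => m _.
by rewrite !mcoeff_wder wB intrB; ring.
Qed.

End WeightDerivations.

Lemma wderC (R : comNzRingType) (w1 w2 : Z2 -> int) (f : LP R) :
  wder w1 (wder w2 f) = wder w2 (wder w1 f).
Proof.
by apply/malgP => n; rewrite !mcoeff_wder mulrCA.
Qed.

(** * Exponents *)

Lemma int_mul_neq (N a b : int) : a != 0 -> `|b| < N -> N * a != b.
Proof.
rewrite ltr_norml => a0 /andP [Nb bN]; apply/eqP => eNab.
have [a1|a1] : 1 <= a \/ a <= -1 by lia.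
  nia.
nia.
Qed.

Lemma int_sq_neq (a b : int) : a - b != 0 -> a + b != 0 -> a ^+ 2 != b ^+ 2.
Proof. move=> ab0 ab1; rewrite !expr2; nia. Qed.

Lemma Z2_eq0 (m : Z2) : (m == 0) = (m.1 == 0) && (m.2 == 0).
Proof. by case: m. Qed.

Lemma norm_lt_sum (s : seq Z2) m : m \in s -> uniq s ->
  `|m.2| < 1 + \sum_(x <- s) `|x.2|.
Proof.
move=> ms us; rewrite (bigD1_seq m) //=; apply: ltr_pwDl => //.
by rewrite lerDl sumr_ge0.
Qed.

Lemma Z2_double_neq0 (q : Z2) : q != 0 -> q + q != 0.
Proof. by rewrite !Z2_eq0 /=; lia. Qed.

Definition cross (p n : Z2) : int := p.2 * n.1 - p.1 * n.2.

Lemma crossDr p u v : cross p (u + v) = cross p u + cross p v.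
Proof. rewrite /cross /=; ring. Qed.

Lemma crossBr p u v : cross p (u - v) = cross p u - cross p v.
Proof. rewrite /cross /=; ring. Qed.

Lemma crossBl p q n : cross (p - q) n = cross p n - cross q n.
Proof. rewrite /cross /=; ring. Qed.

Lemma crossNl p n : cross (- p) n = - cross p n.
Proof. rewrite /cross /=; ring. Qed.

Lemma crossNr p n : cross p (- n) = - cross p n.
Proof. rewrite /cross /=; ring. Qed.

Lemma crossC p n : cross p n = - cross n p.
Proof. rewrite /cross; ring. Qed.

Lemma crossxx p : cross p p = 0.
Proof. by rewrite /cross mulrC subrr. Qed.

Lemma cross_subr p n : cross p (n - p) = cross p n.
Proof. by rewrite crossBr crossxx subr0. Qed.

Lemma exists_cross_neq0 u v : u != 0 -> v != 0 ->
  exists q, (cross q u != 0) && (cross q v != 0).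
Proof.
rewrite !Z2_eq0 => u0 v0.
have [q01|q01] := boolP ((cross (0, 1) u != 0) && (cross (0, 1) v != 0)).
  by exists (0, 1).
have [q10|q10] := boolP ((cross (1, 0) u != 0) && (cross (1, 0) v != 0)).
  by exists (1, 0).
by exists (1, 1); move: u0 v0 q01 q10; rewrite /cross /=; lia.
Qed.

Definition lexle (m n : Z2) : bool := (m.1 < n.1) || (m.1 == n.1) && (m.2 <= n.2).

Lemma lexle_refl m : lexle m m.
Proof. by rewrite /lexle eqxx lexx orbT. Qed.

Lemma lexle_trans a b c : lexle a b -> lexle b c -> lexle a c.
Proof. rewrite /lexle; lia. Qed.

Lemma lexle_total a b : lexle a b || lexle b a.
Proof. rewrite /lexle; lia. Qed.

Lemma lexleD a b c d : lexle a b -> lexle c d -> lexle (a + c) (b + d).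
Proof. rewrite /lexle /=; lia. Qed.

Lemma lexleD_eq a b c d : lexle a b -> lexle c d -> a + c = b + d -> a = b.
Proof.
case: a b => [a1 a2] [b1 b2] ab cd /(congr1 (fun x => (x.1, x.2))) [e1 e2].
by move: ab cd e1 e2; rewrite /lexle /= => ab cd e1 e2; congr pair; lia.
Qed.

Lemma lexle_max (s : seq Z2) x : x \in s ->
  exists2 t, t \in s & {in s, forall m, lexle m t}.
Proof.
elim: s x => [//|a [|b s] IH] x _.
  by exists a; rewrite ?mem_seq1 // => m; rewrite mem_seq1 => /eqP ->; apply: lexle_refl.
have [t ts t_max] := IH b (mem_head b s); have [le_at|ta] := boolP (lexle a t).
  by exists t => [|m]; rewrite in_cons ?ts ?orbT // => /orP [/eqP ->|/t_max].
have {}ta : lexle t a by move: (lexle_total a t); rewrite (negPf ta).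
exists a => [|m]; rewrite in_cons ?eqxx // => /orP [/eqP ->|/t_max mt].
  exact: lexle_refl.
exact: lexle_trans mt ta.
Qed.

Section LexLeadingTerms.
Variable R : comNzRingType.
Implicit Types (f g : LP R) (m n M N : Z2).

Definition lex_bounded f M := forall m, f@_m != 0 -> lexle m M.

Lemma lex_boundedU (c : R) M : lex_bounded << c *g M >> M.
Proof.
move=> m; rewrite mcoeffU; have [<-|_] := eqVneq M m; first by rewrite lexle_refl.
by rewrite mulr0n eqxx.
Qed.

Lemma lex_boundedD f g M : lex_bounded f M -> lex_bounded g M -> lex_bounded (f + g) M.
Proof.
move=> fM gM m; rewrite mcoeffD; have [f0|/fM //] := eqVneq f@_m 0.
by rewrite f0 add0r => /gM.
Qed.

Lemma lex_bounded_wder w f M : lex_bounded f M -> lex_bounded (wder w f) M.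
Proof.
move=> fM m; rewrite mcoeff_wder => wfm; apply: fM.
by apply: contraNneq wfm => ->; rewrite mulr0.
Qed.

Lemma lex_boundedM f g M N : lex_bounded f M -> lex_bounded g N ->
  lex_bounded (f * g) (M + N) /\ (f * g)@_(M + N) = f@_M * g@_N.
Proof.
move=> fM gN.
have fg0 m x : f@_x * g@_(m - x) != 0 -> lexle x M && lexle (m - x) N.
  have [->|/fM ->] := eqVneq f@_x 0; first by rewrite mul0r eqxx.
  by have [->|/gN ->] := eqVneq g@_(m - x) 0; first by rewrite mulr0 eqxx.
split=> [m|].
  rewrite mcoeffM; apply: contraNT => mMN; rewrite big1 // => x _; apply/eqP.
  apply: contraNT mMN => /fg0 /andP [xM mxN].
  by have := lexleD xM mxN; rewrite subrKC.
rewrite (mcoeffMw _ _ (fsubsetU1 M (msupp f))) (bigD1_seq M) ?fset_uniq ?fset1U1 //=.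
rewrite [M + N]addrC addrK big1 ?addr0 // => x xM; apply/eqP.
apply: contraNT xM => /fg0 /andP [le_xM le_N].
by apply/eqP; apply: lexleD_eq le_xM le_N _; rewrite subrKC addrC.
Qed.

End LexLeadingTerms.

Section Torus.
Variable k : fieldType.
Local Notation O := (Ot k).
(* [dX] and [dY], locked so that unification never unfolds them. *)
Local Notation DX := (@wder k fst).
Local Notation DY := (@wder k snd).
Local Notation theta := (ham_field DX DY).
Local Notation pois := (poisson DX DY).
Implicit Types (f g h : O) (m n p : Z2) (xi eta : Vect k).

Lemma dXE f : dX f = DX f. Proof. by rewrite /wder unlock. Qed.
Lemma dYE f : dY f = DY f. Proof. by rewrite /wder unlock. Qed.

Lemma DXB f g : DX (f - g) = DX f - DX g. Proof. exact: wderB. Qed.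
Lemma DYB f g : DY (f - g) = DY f - DY g. Proof. exact: wderB. Qed.

Lemma DXD f g : DX (f + g) = DX f + DX g. Proof. exact: (additive_add DXB). Qed.
Lemma DYD f g : DY (f + g) = DY f + DY g. Proof. exact: (additive_add DYB). Qed.

Lemma DXZ (c : k) f : DX (c *: f) = c *: DX f. Proof. exact: wderZ. Qed.
Lemma DYZ (c : k) f : DY (c *: f) = c *: DY f. Proof. exact: wderZ. Qed.

Lemma DXM f g : DX (f * g) = DX f * g + f * DX g.
Proof. exact: (@wderM k fst (fun _ _ => erefl)). Qed.
Lemma DYM f g : DY (f * g) = DY f * g + f * DY g.
Proof. exact: (@wderM k snd (fun _ _ => erefl)). Qed.

Lemma DXY f : DX (DY f) = DY (DX f). Proof. exact: wderC. Qed.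

Lemma DX0 : DX 0 = 0. Proof. exact: raddf0. Qed.
Lemma DY0 : DY 0 = 0. Proof. exact: raddf0. Qed.

Lemma DX1 : DX 1 = 0.
Proof. by rewrite -[1]/(<< (0 : Z2) >> : O) wderU mulr0z mul0r monalgU0. Qed.
Lemma DY1 : DY 1 = 0.
Proof. by rewrite -[1]/(<< (0 : Z2) >> : O) wderU mulr0z mul0r monalgU0. Qed.

Lemma vactE xi f : vact xi f = der_act DX DY xi f.
Proof. by rewrite /vact dXE dYE. Qed.

Lemma dXM f g : dX (f * g) = dX f * g + f * dX g.
Proof. by rewrite !dXE DXM. Qed.
Lemma dYM f g : dY (f * g) = dY f * g + f * dY g.
Proof. by rewrite !dYE DYM. Qed.

Lemma vact_xx xi : vact xi (xx k) = xi.1 * xx k.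
Proof.
rewrite vactE /der_act /xx /mono !wderU /=.
by rewrite mulr1z mulr0z mul0r mul1r monalgU0 mulr0 addr0.
Qed.

Lemma vact_yy xi : vact xi (yy k) = xi.2 * yy k.
Proof.
rewrite vactE /der_act /yy /mono !wderU /=.
by rewrite mulr1z mulr0z mul0r mul1r monalgU0 mulr0 add0r.
Qed.

Lemma xinvK : xinv k * xx k = 1.
Proof. by rewrite [_ * _]lpmulUU mulr1 addrN. Qed.

Lemma yinvK : yinv k * yy k = 1.
Proof. by rewrite [_ * _]lpmulUU mulr1 addrN. Qed.

Lemma vbracketE xi eta : vbracket xi eta = der_bracket DX DY xi eta.
Proof.
rewrite -(der_bracket_ext dXE dYE) /vbracket /vf_of_der; congr pair.
  exact: (der_commutator_eigen dXM dYM _ _ vact_xx xinvK).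
exact: (der_commutator_eigen dXM dYM _ _ vact_yy yinvK).
Qed.

Lemma omegaE : omega k = 1.
Proof. by rewrite /omega /wedge /= mulr1 mulr0 subr0. Qed.

Lemma eval1_dx xi : eval1 (dx_x k) xi = xi.1.
Proof.
rewrite /eval1 -[(dx_x k).1]/1 -[(dx_x k).2]/0 mul1r mul0r addr0.
by rewrite vact_xx mulrCA xinvK mulr1.
Qed.

Lemma eval1_dy xi : eval1 (dy_y k) xi = xi.2.
Proof.
rewrite /eval1 -[(dy_y k).1]/0 -[(dy_y k).2]/1 mul1r mul0r add0r.
by rewrite vact_yy mulrCA yinvK mulr1.
Qed.

Lemma contrE xi : contr xi (omega k) = (- xi.2, xi.1).
Proof. by rewrite /contr omegaE !mul1r eval1_dx eval1_dy. Qed.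

Lemma d0E f : d0 f = (DX f, DY f).
Proof. by rewrite /d0 dXE dYE. Qed.

Lemma HamE xi : Ham xi <-> exists f, xi = theta f.
Proof.
rewrite /Ham contrE; split=> -[f eq_f]; exists f; rewrite d0E in eq_f *; last first.
  by rewrite eq_f /ham_field /= opprK.
by case: xi eq_f => a b [eb ea]; rewrite /ham_field -eb -ea opprK.
Qed.

Lemma d1_contr xi : d1 (contr xi (omega k)) = DX xi.1 + DY xi.2.
Proof. by rewrite contrE /d1 /= dXE dYE (additive_opp DYB) opprK. Qed.

Lemma theta_linear (c : k) f g : theta (c *: f + g) = c *: theta f + theta g.
Proof.
rewrite /ham_field DXD DYD DXZ DYZ; congr pair => /=.
by rewrite opprD scalerN.
Qed.

Lemma theta_const (c : k) : theta (c *: 1) = 0.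
Proof. by rewrite /ham_field DXZ DYZ DX1 DY1 !scaler0 oppr0. Qed.

Lemma theta0 : theta 0 = 0.
Proof. by rewrite /ham_field DX0 DY0 oppr0. Qed.

Lemma theta_sub_const f (c : k) : theta (f - c *: 1) = theta f.
Proof. by rewrite /ham_field DXB DYB DXZ DYZ DX1 DY1 !scaler0 !subr0. Qed.

Lemma theta_bracket f g : vbracket (theta f) (theta g) = theta (pois f g).
Proof. by rewrite vbracketE (der_bracket_ham DXB DYB DXM DYM DXY). Qed.

Lemma VP_bracket_theta xi f : VP xi -> vbracket xi (theta f) = theta (vact xi f).
Proof.
rewrite /VP d1_contr vbracketE vactE.
exact: (der_bracket_ham_r DXB DYB DXM DYM DXY).
Qed.

Lemma theta_VP f : VP (theta f).
Proof. by rewrite /VP d1_contr /= (additive_opp DYB) DXY subrr. Qed.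

Lemma Ham_theta f : Ham (theta f).
Proof. by apply/HamE; exists f. Qed.

Lemma Ham_subspace : subspace (@Ham k).
Proof.
split; first by rewrite -(theta_const 0); apply: Ham_theta.
by move=> c _ _ /HamE [f ->] /HamE [g ->]; rewrite -theta_linear; apply: Ham_theta.
Qed.

Lemma Ham_lie : lie_subalgebra (@vbracket k) (@Ham k).
Proof.
split; first exact: Ham_subspace.
by move=> _ _ /HamE [f ->] /HamE [g ->]; rewrite theta_bracket; apply: Ham_theta.
Qed.

(** * Hamiltonian and divergence-free fields *)

Lemma Ham_ideal : lie_ideal (@vbracket k) (@Ham k) (@VP k).
Proof.
split; first exact: Ham_subspace.
split; first by move=> _ /HamE [f ->]; apply: theta_VP.
by move=> xi _ VPxi /HamE [f ->]; rewrite VP_bracket_theta //; apply: Ham_theta.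
Qed.

Lemma mcoeff0_DX f : (DX f)@_0 = 0.
Proof. by rewrite mcoeff_wder mulr0z mul0r. Qed.
Lemma mcoeff0_DY f : (DY f)@_0 = 0.
Proof. by rewrite mcoeff_wder mulr0z mul0r. Qed.

Lemma Ham_const_eq0 (a b : k) : Ham (a *: 1, b *: 1) -> a = 0 /\ b = 0.
Proof.
move=> /HamE [f [/(congr1 (mcoeff 0)) ea /(congr1 (mcoeff 0)) eb]].
rewrite [RHS]mcoeff0_DY [LHS]mcoeffZ mcoeff_one mulr1 in ea.
rewrite [RHS]mcoeffN mcoeff0_DX oppr0 [LHS]mcoeffZ mcoeff_one mulr1 in eb.
by [].
Qed.

Lemma VP_const (a b : k) : VP (a *: 1, b *: 1).
Proof. by rewrite /VP d1_contr /= DXZ DYZ DX1 DY1 !scaler0 addr0. Qed.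

Lemma Ham_proper : proper_in (@Ham k) (@VP k).
Proof.
split; first by case: Ham_ideal => _ [].
exists (1 *: 1, 0 *: 1); split; first exact: VP_const.
by move=> /Ham_const_eq0 [/eqP]; rewrite oner_eq0.
Qed.

Definition euler (i : 'I_2) : Vect k := if i == ord0 then (1, 0) else (0, 1).

Lemma sum_euler (c : 'I_2 -> k) :
  \sum_(i < 2) c i *: euler i = (c ord0 *: 1, c ord_max *: 1).
Proof.
rewrite big_ord_recl big_ord1 /euler /=.
have -> : lift ord0 ord0 = ord_max :> 'I_2 by apply: val_inj.
transitivity ((c ord0 *: 1 + c ord_max *: 0 : O), (c ord0 *: 0 + c ord_max *: 1 : O)) => //.
by rewrite !scaler0 addr0 add0r.
Qed.

Hypothesis char0 : [pchar k] =i pred0.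

Lemma intr_eq0_char0 (z : int) : (z%:~R == 0 :> k) = (z == 0).
Proof.
case: z => n /=; first by rewrite ((pcharf0P _).1 char0).
by rewrite NegzE mulrNz oppr_eq0 ((pcharf0P _).1 char0).
Qed.

Lemma intr_inj_char0 (a b : int) : a%:~R = b%:~R :> k -> a = b.
Proof. by move/eqP; rewrite -subr_eq0 -intrB intr_eq0_char0 subr_eq0 => /eqP. Qed.

Lemma closed_exact a b : DX a + DY b = 0 -> a@_0 = 0 -> b@_0 = 0 ->
  exists f, (a, b) = theta f.
Proof.
move=> closed a0 b0.
have cE n : (n.1)%:~R * a@_n = - ((n.2)%:~R * b@_n).
  apply/eqP; rewrite -addr_eq0; apply/eqP.
  by move: (congr1 (mcoeff n) closed); rewrite mcoeffD !mcoeff_wder mcoeff0.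
(* Integrate along y off the axis [m.2 = 0], along x on it. *)
pose F m : k := if m.2 == 0 then - (b@_m / (m.1)%:~R) else a@_m / (m.2)%:~R.
have Fs m : m \notin msupp a `|` msupp b -> F m = 0.
  rewrite in_fsetU negb_or => /andP [/mcoeff_outdom am /mcoeff_outdom bm].
  by rewrite /F am bm !mul0r oppr0 if_same.
exists [malg m in msupp a `|` msupp b => F m]; rewrite /ham_field.
congr pair; apply/malgP => n; rewrite ?mcoeffN mcoeff_wder mcoeff_malg_fun // /F.
  case: (eqVneq n 0) => [-> //|n0]; first by rewrite a0 mulr0z mul0r.
  case: eqVneq => [n2|n2]; last by rewrite mulrCA mulfV ?mulr1 ?intr_eq0_char0.
  have n1 : n.1 != 0 by move: n0; rewrite Z2_eq0 n2 andbT.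
  rewrite n2 mulr0z mul0r; apply/eqP; move: (cE n).
  by rewrite n2 mulr0z mul0r oppr0 => /eqP; rewrite mulf_eq0 intr_eq0_char0 (negPf n1).
case: (eqVneq n 0) => [-> //|n0]; first by rewrite b0 mulr0z mul0r oppr0.
case: eqVneq => [n2|n2].
  have n1 : n.1 != 0 by move: n0; rewrite Z2_eq0 n2 andbT.
  by rewrite mulrN opprK mulrCA mulfV ?mulr1 ?intr_eq0_char0.
by rewrite mulrA cE mulNr mulrAC mulfV ?mul1r ?opprK ?intr_eq0_char0.
Qed.

Lemma codim_Ham : codim_in 2 (@Ham k) (@VP k).
Proof.
exists euler; split.
  by move=> i; rewrite /VP d1_contr /euler; case: ifP => _ /=;
    rewrite ?DX0 ?DY0 ?DX1 ?DY1 addr0.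
split=> [xi|c]; last first.
  rewrite sum_euler => /Ham_const_eq0 [c0 c1] -[[|[|//]] i2].
    by rewrite (_ : Ordinal i2 = ord0) //; apply: val_inj.
  by rewrite (_ : Ordinal i2 = ord_max) //; apply: val_inj.
rewrite /VP d1_contr => closed.
exists (fun i => if i == ord0 then xi.1@_0 else xi.2@_0); rewrite sum_euler /=.
have [f fE] : exists f, (xi.1 - xi.1@_0 *: 1, xi.2 - xi.2@_0 *: 1) = theta f.
  apply: closed_exact.
    by rewrite DXB DYB DXZ DYZ DX1 DY1 !scaler0 !subr0.
  by rewrite mcoeffB mcoeffZ mcoeff_one mulr1 subrr.
  by rewrite mcoeffB mcoeffZ mcoeff_one mulr1 subrr.
by apply/HamE; exists f; rewrite -fE.
Qed.

(** * Brackets with monomials *)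

Lemma mcoeff_poissonU p g n : (pois << p >> g)@_n = (cross p n)%:~R * g@_(n - p).
Proof.
rewrite /poisson mcoeffB !wderU [X in X - _]mcoeffUM [X in _ - X]mcoeffUM.
rewrite !mcoeff_wder /cross.
rewrite -[(n - p).1]/(n.1 - p.1) -[(n - p).2]/(n.2 - p.2) !intrB !intrM.
move: (g@_(n - p)) ((p.1)%:~R : k) ((p.2)%:~R : k) ((n.1)%:~R : k) ((n.2)%:~R : k).
by move=> *; ring.
Qed.

Lemma poissonUU p m : pois << p >> << m >> = (cross p m)%:~R *: << m + p >>.
Proof.
apply/malgP => n; rewrite mcoeff_poissonU mcoeffZ !mcoeffU -cross_subr.
have -> : (m == n - p) = (m + p == n) by rewrite eq_sym subr_eq eq_sym.
by case: eqP => [<-|_]; rewrite ?addrK ?mulr0.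
Qed.

Lemma mcoeff_double_poisson q f n :
  (pois << q >> (pois << - q >> f))@_n = - ((cross q n) ^+ 2)%:~R * f@_n.
Proof.
rewrite !mcoeff_poissonU opprK subrK crossNl cross_subr mulrA -intrM.
by rewrite mulrN -expr2 mulrNz.
Qed.

Lemma poisson_monomial_onto f : exists p g, pois << p >> g = f - f@_0 *: 1.
Proof.
pose p : Z2 := (1, 1 + \sum_(x <- msupp f) `|x.2|).
(* [cross p m = N * m.1 - m.2] with [N > |m.2|] vanishes only at [m = 0]. *)
have cross_neq0 m : m \in msupp f -> m != 0 -> cross p m != 0.
  move=> fm m0; rewrite /cross /= mul1r.
  have [m1|m1] := eqVneq m.1 0.
    by move: m0; rewrite Z2_eq0 m1 mulr0 sub0r oppr_eq0.
  by rewrite subr_eq0 int_mul_neq // norm_lt_sum ?fset_uniq.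
pose h : O := [malg m in msupp f => f@_m / (cross p m)%:~R].
exists p, ((<< - p >> : O) * h); apply/malgP => n.
rewrite mcoeff_poissonU mcoeffUM opprK subrK mul1r mcoeffE.
rewrite [RHS]mcoeffB mcoeffZ mcoeff_one.
have [->|n0] := eqVneq n 0.
  by rewrite /cross !mulr0 subrr mul0r mulr1 subrr.
rewrite mulr0 subr0; case: ifPn => [fn|/mcoeff_outdom ->]; last by rewrite mulr0.
by rewrite mulrCA mulfV ?mulr1 // intr_eq0_char0 cross_neq0.
Qed.

Lemma theta_single_bracket f :
  exists p g, theta f = vbracket (theta << p >>) (theta g).
Proof.
have [p [g fE]] := poisson_monomial_onto f.
by exists p, g; rewrite theta_bracket fE theta_sub_const.
Qed.

Lemma Eom_poisson h g : Eom (pois h g).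
Proof.
exists (DY h * g, - (DX h * g)); rewrite /is_div d1_contr omegaE mulr1 /=.
by rewrite (poisson_div DYB DXM DYM DXY).
Qed.

Lemma calE_Ham xi : calE xi <-> Ham xi.
Proof.
split=> [[f [_ eq_f]]|/HamE [f ->]]; first by exists f.
have [p [g fE]] := poisson_monomial_onto f.
exists (f - f@_0 *: 1); split; first by rewrite -fE; apply: Eom_poisson.
rewrite contrE d0E DXB DYB DXZ DYZ DX1 DY1 !scaler0 !subr0.
by congr pair; apply: opprK.
Qed.

Lemma lie_commutator_Ham xi : lie_commutator (@vbracket k) (@Ham k) (@Ham k) xi <-> Ham xi.
Proof.
split; first exact: lie_commutator_sub Ham_lie.
move=> /HamE [f ->]; have [p [g ->]] := theta_single_bracket f.
apply: lin_span1; exists (theta << p >>), (theta g).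
by split; [apply: Ham_theta | split; [apply: Ham_theta |]].
Qed.

Lemma Ham_nonabelian : vbracket (theta << (1, 0) >>) (theta << (0, 1) >>) != 0.
Proof.
rewrite theta_bracket; apply/eqP => /(congr1 (fun xi => xi.1@_((1, 1) : Z2))).
rewrite /= mcoeff_wder mcoeff_poissonU mcoeff0 mcoeffU /cross /=.
rewrite (_ : 0 * 1 - 1 * 1 = -1 :> int) // mulrN1z mulr1z !mul1r mulr1.
by move/eqP; rewrite oppr_eq0 oner_eq0.
Qed.

Lemma bracket_width_Ham : bracket_width_eq (@vbracket k) (@Ham k) 1.
Proof.
split.
  move=> _ /lie_commutator_Ham /HamE [f ->]; have [p [g ->]] := theta_single_bracket f.
  exists 1%N; split=> //; exists (fun=> theta << p >>), (fun=> theta g).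
  by rewrite big_ord1; split=> // _; split; apply: Ham_theta.
move=> m; rewrite ltnS leqn0 => /eqP -> width0.
have comm_x_y : lie_commutator (@vbracket k) (@Ham k) (@Ham k)
    (vbracket (theta << (1, 0) >>) (theta << (0, 1) >>)).
  by apply/lie_commutator_Ham; case: Ham_lie => _; apply; apply: Ham_theta.
have [m' [m'0 [b [c [_]]]]] := width0 _ comm_x_y.
move: m'0 b c; rewrite leqn0 => /eqP -> b c; rewrite big_ord0.
by move/eqP; apply/negP: Ham_nonabelian.
Qed.

(** * Simplicity *)

Definition ncsupp f : {fset Z2} := msupp f `\ 0.

Lemma in_ncsupp f m : (m \in ncsupp f) = (m != 0) && (f@_m != 0).
Proof. by rewrite in_fsetD1 mcoeff_neq0. Qed.

Lemma theta_ncsupp0 f : ncsupp f = fset0 -> theta f = 0.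
Proof.
move=> f_const; rewrite -(theta_sub_const f f@_0) (_ : f - f@_0 *: 1 = 0) ?theta0 //.
apply/malgP => n; rewrite mcoeffB mcoeffZ mcoeff_one mcoeff0.
have [->|n0] := eqVneq n 0; first by rewrite mulr1 subrr.
apply/eqP; rewrite mulr0 subr0; apply: contraT => fn.
by rewrite -(in_fset0 n) -f_const in_ncsupp n0.
Qed.

Section PoissonIdeal.
Variable J : O -> Prop.
Hypotheses (J_subspace : subspace J) (J1 : J 1)
           (J_poisson : forall h f, J f -> J (pois h f)).

Lemma pideal_lin (c : k) f g : J f -> J g -> J (c *: f + g).
Proof. by case: J_subspace => _; apply. Qed.

Lemma pideal_scale (c : k) f : J f -> J (c *: f).
Proof. by move=> Jf; rewrite -[_ *: _]addr0; apply: pideal_lin => //; case: J_subspace. Qed.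

Lemma pideal_drop_exponent f m0 m1 : J f -> m0 \in ncsupp f -> m1 \in ncsupp f ->
  m0 != m1 -> m0 + m1 != 0 ->
  exists2 f', J f' & (m1 \in ncsupp f') && (ncsupp f' `<=` ncsupp f `\ m0).
Proof.
move=> Jf m0f m1f m01 m0N1.
have m0B1 : m0 - m1 != 0 by rewrite subr_eq0.
have [q /andP [qB qD]] := exists_cross_neq0 m0B1 m0N1.
(* [f'] is [({x^q, {x^-q, _}} - lam m0) f]: it kills [x^m0] and keeps [x^m1]. *)
pose lam n : k := - ((cross q n) ^+ 2)%:~R.
pose f' := - lam m0 *: f + pois << q >> (pois << - q >> f).
have f'E n : f'@_n = (lam n - lam m0) * f@_n.
  by rewrite mcoeffD mcoeffZ mcoeff_double_poisson mulrBl addrC !mulNr.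
have lam01 : lam m1 != lam m0.
  rewrite /lam eqr_opp; apply/negP => /eqP /intr_inj_char0 /eqP.
  by apply/negP; rewrite eq_sym int_sq_neq // -?crossBr -?crossDr.
exists f'; first by apply: pideal_lin => //; apply: J_poisson; apply: J_poisson.
rewrite in_ncsupp f'E mulf_neq0 ?subr_eq0 //; last first.
  by move: m1f; rewrite in_ncsupp => /andP [].
move: m1f; rewrite in_ncsupp => /andP [-> _] /=.
apply/fsubsetP => m; rewrite in_fsetD1 !in_ncsupp f'E mulf_eq0 negb_or.
case/andP=> -> /andP [lam_m ->]; rewrite !andbT.
by apply: contraNneq lam_m => ->; rewrite subrr.
Qed.

Lemma pideal_monomial_single f m0 : J f -> m0 \in ncsupp f ->
  ncsupp f `<=` [fset m0] -> J << m0 >>.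
Proof.
move=> Jf m0f /fsubsetP f_m0; move: (m0f); rewrite in_ncsupp => /andP [m00 fm00].
have -> : << m0 >> = (f@_m0)^-1 *: (f - f@_0 *: 1) :> O.
  apply/malgP => n; rewrite mcoeffU mcoeffZ mcoeffB mcoeffZ mcoeff_one.
  have [<-|nm0] := eqVneq m0 n; first by rewrite (negPf m00) mulr0 subr0 mulVf.
  have [->|n0] := eqVneq n 0; first by rewrite mulr1 subrr mulr0.
  have : n \notin ncsupp f by apply: contra nm0 => /f_m0; rewrite inE eq_sym.
  by rewrite in_ncsupp n0 negbK => /eqP ->; rewrite mulr0 subr0 mulr0.
by apply: pideal_scale; rewrite -scaleNr addrC; apply: pideal_lin J1 Jf.
Qed.

Lemma pideal_monomial_opposite f m0 : J f -> m0 \in ncsupp f ->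
  - m0 \in ncsupp f -> ncsupp f `<=` [fset m0; - m0] ->
  exists2 m, m != 0 & J << m >>.
Proof.
move=> Jf m0f Nm0f /fsubsetP f_pm.
have m00 : m0 != 0 by move: m0f; rewrite in_ncsupp => /andP [].
(* [x^m0] and [x^-m0] cannot be separated by [pideal_drop_exponent];
   after bracketing with [x^q] their exponents are no longer opposite. *)
have [q /andP [qm0 _]] := exists_cross_neq0 m00 m00.
have q0 : q != 0 by apply: contraNneq qm0 => ->; rewrite /cross !mul0r subrr.
pose g := pois << q >> f.
have gE n : g@_n = (cross q n)%:~R * f@_(n - q) by rewrite mcoeff_poissonU.
have shift_g m : m \in ncsupp f -> cross q m != 0 -> m + q \in ncsupp g.
  rewrite !in_ncsupp gE addrK crossDr crossxx addr0 => /andP [_ fm] qm.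
  rewrite mulf_neq0 ?intr_eq0_char0 // andbT addr_eq0.
  by apply: contraNneq qm => ->; rewrite crossNr crossxx oppr0.
have g_pm : ncsupp g `<=` [fset m0 + q; - m0 + q].
  apply/fsubsetP => n; rewrite in_ncsupp gE mulf_eq0 negb_or => /and3P [_ qn fn].
  have : n - q \in ncsupp f.
    by rewrite in_ncsupp fn andbT subr_eq0; apply: contraNneq qn => ->; rewrite crossxx.
  by move=> /f_pm; rewrite !inE !subr_eq.
have Nm0q : - m0 + q \in ncsupp g by rewrite shift_g // crossNr oppr_eq0.
have m0q_neq : m0 + q != - m0 + q.
  by rewrite (inj_eq (addIr q)) -addr_eq0 Z2_double_neq0.
have m0q_sum : (m0 + q) + (- m0 + q) != 0.
  by rewrite addrACA subrr add0r Z2_double_neq0.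
have [g' Jg' /andP [Nm0g' /fsubsetP g'_sub]] :=
  pideal_drop_exponent (J_poisson _ Jf) (shift_g _ m0f qm0) Nm0q m0q_neq m0q_sum.
exists (- m0 + q); first by move: Nm0q; rewrite in_ncsupp => /andP [].
apply: pideal_monomial_single Jg' Nm0g' _; apply/fsubsetP => n /g'_sub.
by rewrite in_fsetD1 => /andP [nm0q /(fsubsetP g_pm)]; rewrite !inE (negPf nm0q).
Qed.

Lemma pideal_has_monomial f : J f -> ncsupp f != fset0 -> exists2 m, m != 0 & J << m >>.
Proof.
have [N] := ubnP #|` ncsupp f|; elim: N f => // N IH f ltfN Jf /fset0Pn [m0 m0f].
have [f_pm|/fsubsetPn [m1 m1f]] := boolP (ncsupp f `<=` [fset m0; - m0]).
  have [Nm0f|Nm0f] := boolP (- m0 \in ncsupp f).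
    exact: pideal_monomial_opposite Jf m0f Nm0f f_pm.
  exists m0; first by move: m0f; rewrite in_ncsupp => /andP [].
  apply: pideal_monomial_single Jf m0f _; apply/fsubsetP => m mf.
  move/fsubsetP/(_ m mf): f_pm; rewrite !inE => /orP [//|/eqP mE].
  by move: Nm0f; rewrite -mE mf.
rewrite !inE negb_or => /andP [m10 m1N].
have m01 : m0 != m1 by rewrite eq_sym.
have m0N1 : m0 + m1 != 0 by rewrite addrC addr_eq0.
have [f' Jf' /andP [m1f' /fsubset_leq_card f'_card]] :=
  pideal_drop_exponent Jf m0f m1f m01 m0N1.
apply: IH Jf' _; last by apply/fset0Pn; exists m1.
apply: leq_ltn_trans f'_card _; rewrite -ltnS; apply: leq_trans ltfN.
by rewrite ltnS (cardfsD1 m0 (ncsupp f)) m0f.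
Qed.

Lemma pideal_monomial_step m n : J << m >> -> cross (n - m) m != 0 -> J << n >>.
Proof.
move=> Jm nm; have nm0 : (cross (n - m) m)%:~R != 0 :> k by rewrite intr_eq0_char0.
have := pideal_scale ((cross (n - m) m)%:~R)^-1 (J_poisson << n - m >> Jm).
by rewrite poissonUU scalerA (mulVf nm0) scale1r subrKC.
Qed.

Lemma pideal_all_monomials m : m != 0 -> J << m >> -> forall n, J << n >>.
Proof.
move=> m0 Jm n; have [->|n0] := eqVneq n 0; first exact: J1.
have [q /andP [qm qn]] := exists_cross_neq0 m0 n0.
have Jq : J << q >> by apply: pideal_monomial_step Jm _; rewrite crossBl crossxx subr0.
by apply: pideal_monomial_step Jq _; rewrite crossBl crossxx subr0 crossC oppr_eq0.
Qed.

Lemma pideal_full f : J f -> ncsupp f != fset0 -> forall g, J g.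
Proof.
move=> Jf /(pideal_has_monomial Jf) [m m0 Jm] g; rewrite (monalgE g).
apply: (@subspace_sum _ _ J) => // n; rewrite monalgUZ.
by apply: pideal_scale; apply: pideal_all_monomials Jm n.
Qed.

End PoissonIdeal.

Lemma simple_Ham : simple_lie (@vbracket k) (@Ham k).
Proof.
split; first exact: Ham_lie.
split.
  exists (theta << (1, 0) >>), (theta << (0, 1) >>).
  by split; [apply: Ham_theta | split; [apply: Ham_theta | apply/eqP/Ham_nonabelian]].
move=> I [[I0 I_lin] [I_Ham I_ideal]].
have [[x0 [Ix0 x00]]|noI] := classic (exists x, I x /\ x <> 0); last first.
  by left=> x Ix; apply: NNPP => x0; apply: noI; exists x.
right=> _ /HamE [g ->]; have [f0 x0E] := (HamE _).1 (I_Ham _ Ix0).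
have theta1 : theta 1 = 0 by rewrite -(theta_const 1) scale1r.
apply: (@pideal_full (fun f => I (theta f)) _ _ _ f0); rewrite -?x0E //.
- by split=> [|c f1 f2]; rewrite ?theta0 ?theta_linear //; apply: I_lin.
- by rewrite theta1.
- by move=> h f If; rewrite -theta_bracket; apply: I_ideal => //; apply: Ham_theta.
- by apply: contra_notN x00 => /eqP /theta_ncsupp0 <-.
Qed.

(** * Locally nilpotent vector fields *)

Lemma Vect_eq0 xi : (xi == 0) = (xi.1 == 0) && (xi.2 == 0).
Proof. by case: xi. Qed.

Definition leading_weight xi t N : k := xi.1@_t * (N.1)%:~R + xi.2@_t * (N.2)%:~R.

Lemma leading_weightD xi t a b :
  leading_weight xi t (a + b) = leading_weight xi t a + leading_weight xi t b.
Proof.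
rewrite /leading_weight -[(a + b).1]/(a.1 + b.1) -[(a + b).2]/(a.2 + b.2) !intrD.
by rewrite !mulrDr addrACA.
Qed.

Lemma der_act_lead xi t g N : lex_bounded xi.1 t -> lex_bounded xi.2 t ->
  lex_bounded g N -> lex_bounded (der_act DX DY xi g) (t + N) /\
  (der_act DX DY xi g)@_(t + N) = leading_weight xi t N * g@_N.
Proof.
move=> xi1t xi2t gN.
have [b1 c1] := @lex_boundedM k _ _ _ _ xi1t (@lex_bounded_wder k fst g N gN).
have [b2 c2] := @lex_boundedM k _ _ _ _ xi2t (@lex_bounded_wder k snd g N gN).
split; first exact: (lex_boundedD b1 b2).
rewrite mcoeffD [X in X + _]c1 [X in _ + X]c2 !mcoeff_wder /leading_weight.
by rewrite mulrDl !mulrA.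
Qed.

Lemma iter_der_act_lead xi t n0 s : lex_bounded xi.1 t -> lex_bounded xi.2 t ->
  (forall i, leading_weight xi t (iter i (+%R t) n0) != 0) ->
  lex_bounded (iter s (der_act DX DY xi) << n0 >>) (iter s (+%R t) n0) /\
  (iter s (der_act DX DY xi) << n0 >>)@_(iter s (+%R t) n0) != 0.
Proof.
move=> xi1t xi2t lw_neq0; elim: s => [|s [bs cs]] /=.
  by split; [apply: lex_boundedU | rewrite mcoeffUU oner_eq0].
have [b c] := der_act_lead xi1t xi2t bs.
by split=> //; rewrite c mulf_neq0.
Qed.

Lemma locally_nilpotent_eq0 xi : locally_nilpotent xi -> xi = 0.
Proof.
move=> nil_xi; apply/eqP; apply: contraT => xi0.
have [x x_supp] : exists x, x \in msupp xi.1 `|` msupp xi.2.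
  move: xi0; rewrite Vect_eq0 negb_and => /orP [] /msupp_neq0 [x x_supp];
    by exists x; rewrite in_fsetU x_supp ?orbT.
have [t t_supp t_max] := lexle_max x_supp.
have xi1t : lex_bounded xi.1 t.
  by move=> m; rewrite mcoeff_neq0 => m1; apply: t_max; rewrite in_fsetU m1.
have xi2t : lex_bounded xi.2 t.
  by move=> m; rewrite mcoeff_neq0 => m2; apply: t_max; rewrite in_fsetU m2 orbT.
pose lw := leading_weight xi t.
have lw_iter n0 i : lw (iter i (+%R t) n0) = lw n0 + i%:R * lw t.
  elim: i => [|i IH] /=; first by rewrite mul0r addr0.
  rewrite /lw leading_weightD -/lw IH -natr1.
  by move: (lw t) (lw n0) (i%:R : k) => a b c; ring.
have [n0 lw_n0] : exists n0, forall i, lw (iter i (+%R t) n0) != 0.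
  have [lwt0|lwt] := eqVneq (lw t) 0.
    have : (xi.1@_t != 0) || (xi.2@_t != 0) by rewrite !mcoeff_neq0 -in_fsetU.
    case/orP=> [xi1|xi2]; [exists (1, 0) | exists (0, 1)] => i;
      by rewrite lw_iter lwt0 mulr0 addr0 /lw /leading_weight /= ?mulr1z ?mulr0z
         ?mulr1 ?mulr0 ?addr0 ?add0r.
  exists t => i; rewrite lw_iter -[X in X + _]mul1r -mulrDl mulf_neq0 //.
  by rewrite addrC natr1 ((pcharf0P _).1 char0).
have [s iter_s] := nil_xi << n0 >>.
have [_] := iter_der_act_lead s xi1t xi2t lw_n0.
by rewrite -(eq_iter (vactE xi)) iter_s mcoeff0 eqxx.
Qed.

End Torus.

Theorem proposition4p6 (k : closedFieldType) (char0 : [pchar k] =i pred0) :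
  (* (1) *)
  ((forall v : Vect k,
      lie_generated (@vbracket k) (@locally_nilpotent k) v -> v = 0) /\
   (forall v : Vect k,
      lie_generated (@vbracket k)
        (fun xi => locally_nilpotent xi /\ Ham xi) v -> v = 0)) /\
  (* (2) *)
  (lie_ideal (@vbracket k) (@Ham k) (@VP k) /\
   proper_in (@Ham k) (@VP k) /\
   codim_in 2 (@Ham k) (@VP k)) /\
  (* (3) *)
  ((forall xi : Vect k,
      calE xi <-> lie_commutator (@vbracket k) (@Ham k) (@Ham k) xi) /\
   (forall xi : Vect k,
      lie_commutator (@vbracket k) (@Ham k) (@Ham k) xi <-> Ham xi) /\
   simple_lie (@vbracket k) (@Ham k) /\
   bracket_width_eq (@vbracket k) (@Ham k) 1).
Proof.
have lie0 : lie_subalgebra (@vbracket k) (eq^~ 0).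
  by apply: lie_subalgebra0; rewrite vbracketE der_bracket0.
split.
  split=> v gen_v; apply: gen_v lie0 _; first exact: locally_nilpotent_eq0 char0.
  by move=> xi [nil_xi _]; apply: locally_nilpotent_eq0 char0 _ nil_xi.
split; first by split; [exact: Ham_ideal | split; [exact: Ham_proper | exact: codim_Ham]].
split=> [xi|].
  exact: iff_trans (calE_Ham char0 xi) (iff_sym (lie_commutator_Ham char0 xi)).
split; first exact: lie_commutator_Ham.
by split; [exact: simple_Ham | exact: bracket_width_Ham].
Qed.
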